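(* Let $\Theta$ be given, let $M_1,M_2$ be $\omega$-saturated $\Theta$-models, let $x$ be a variable, and let $t\in U_1$, $t'\in U_2$ satisfy $tp_x(M_1,t)\subseteq tp_x(M_2,t')$. Define $A=\{\langle a,b\rangle:\exists i,j\,(\{i,j\}=\{1,2\},\ a\in U_i,\ b\in U_j,\ tp_x(M_i,a)\subseteq tp_x(M_j,b))\}$ and $B=\{\langle a,b\rangle:\exists i,j\,(\{i,j\}=\{1,2\},\ a\in U_i,\ b\in U_j,\ imp_x(M_i,a)\supseteq imp_x(M_j,b))\}$. Then $(A,B)$ is a $(2,2)$-modal $\langle(M_1,t),(M_2,t')\rangle$-asimulation.
   Context: Correspondence language: classical first-order logic without identity over $\Sigma=\{R,R_\Box,R_\Diamond,P_1,P_2,\dots\}$ ($R,R_\Box,R_\Diamond$ binary, $P_n$ unary). $\Theta$ is a subset of $\Sigma$ containing $R,R_\Box,R_\Diamond$; $\Theta$-models $M_k=\langle U_k,\iota_k\rangle$, with $R_k=\iota_k(R)$, $R_{\Box k}=\iota_k(R_\Box)$, $R_{\Diamond k}=\iota_k(R_\Diamond)$. $M,a\models\varphi(x)$ means $\varphi$ holds in $M$ under assignments sending $x$ to $a$; $a\models_k\varphi(x)$ abbreviates $M_k,a\models\varphi(x)$. $s\overset{\leftrightarrow}{A}t$ means $sAt$ and $tAs$. Modal intuitionistic formulas: built from $p_n,\bot$ with $\wedge,\vee,\to,\Box,\Diamond$. $ST_{22}(p_n,x)=P_n(x)$, $ST_{22}(\bot,x)=\bot$, commutes with $\wedge,\vee$;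 $ST_{22}(I\to J,x)=\forall y(R(x,y)\to(ST_{22}(I,y)\to ST_{22}(J,y)))$; $ST_{22}(\Box I,x)=\forall y(R(x,y)\to\forall z(R_\Box(y,z)\to ST_{22}(I,z)))$; $ST_{22}(\Diamond I,x)=\forall y(R(x,y)\to\exists z(R_\Diamond(y,z)\wedge ST_{22}(I,z)))$. $int_x(\Theta)$ is the set of all $\Theta$-formulas of the form $ST_{22}(I,x)$ with $I$ modal intuitionistic. For a $\Theta$-model $M$ and $t\in U$: $tp_x(M,t)=\{\varphi\in int_x(\Theta):M,t\models\varphi\}$, $\overline{tp}_x(M,t)=\{\varphi\in int_x(\Theta):M,t\not\models\varphi\}$, and $imp_x(M,t)=\bigcap\{\overline{tp}_x(M,u):\iota(R_\Diamond)(t,u)\}$. $\omega$-saturation: for $\bar a_n\in U$, $[M,\bar a_n]$ is the expansion of $M$ by new constants for $\bar a_n$ interpreted as themselves. $M$ is $\omega$-saturated iff for all $k,n$ and all $\bar a_n\in U$, every set of formulas $\Gamma(\bar w_k)$ (in the expanded language, free variables among $\bar w_k$) consistent with the set of all sentences true in $[M,\bar a_n]$ is satisfiable in $[M,\bar a_n]$. A $(2,2)$-modal $\langle(M_1,t),(M_2,u)\rangle$-asimulation is a pair $(A,B)$ with $A,B\subseteq(U_1\times U_2)\cup(U_2\times U_1)$ such that $tAu$ and, for all $i,j\in\{1,2\}$, $a,c,e\in U_i$, $b,d,f\in U_j$, unary $P\in\Theta$: if $aAb$ and $a\models_iP(x)$ then $b\models_jP(x)$; if $aAb$, $bR_jd$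 then some $c\in U_i$ has $aR_ic$ and $c\overset{\leftrightarrow}{A}d$; if $aAb$, $bR_jd$, $dR_{\Box j}f$ then some $c,e\in U_i$ have $aR_ic$, $cR_{\Box i}e$, $eAf$; if $aAb$, $bR_jd$ then some $c\in U_i$ has $aR_ic$ and $cBd$; if $aBb$, $aR_{\Diamond i}c$ then some $d\in U_j$ has $bR_{\Diamond j}d$ and $cAd$. *)

From Stdlib Require Import Arith.

(* Theta is determined by the set [theta] of indices n with P_n in Theta;
   R, R_Box, R_Diamond are always in Theta. *)

Inductive term : Type :=
| TVar (v : nat)
| TConst (k : nat).   (* new constant c_k (for the expansions [M, a_n]) *)

Inductive rel : Type := RelR | RelBox | RelDia.

Inductive form : Type :=
| FBot
| FPred (n : nat) (t : term)
| FRel (r : rel) (t1 t2 : term)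
| FNot (f : form)
| FAnd (f g : form)
| FOr (f g : form)
| FImp (f g : form)
| FAll (v : nat) (f : form)
| FEx (v : nat) (f : form).

(* Theta-model: nonempty universe; interpretations of R, R_Box, R_Dia and of
   the unary predicates (only those with [theta n] are ever consulted). *)
Record model : Type := Model {
  U : Type;
  inh : U;
  mR : U -> U -> Prop;
  mRB : U -> U -> Prop;
  mRD : U -> U -> Prop;
  mP : nat -> U -> Prop
}.

Definition upd {A : Type} (s : nat -> A) (v : nat) (a : A) : nat -> A :=
  fun w => if Nat.eqb w v then a else s w.

Definition eval_term (M : model) (c s : nat -> U M) (t : term) : U M :=
  match t with TVar v => s v | TConst k => c k end.

Definition interp_rel (M : model) (r : rel) : U M -> U M -> Prop :=
  match r with RelR => mR M | RelBox => mRB M | RelDia => mRD M end.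

Fixpoint sat (M : model) (c s : nat -> U M) (f : form) : Prop :=
  match f with
  | FBot => False
  | FPred n t => mP M n (eval_term M c s t)
  | FRel r t1 t2 => interp_rel M r (eval_term M c s t1) (eval_term M c s t2)
  | FNot g => ~ sat M c s g
  | FAnd g h => sat M c s g /\ sat M c s h
  | FOr g h => sat M c s g \/ sat M c s h
  | FImp g h => sat M c s g -> sat M c s h
  | FAll v g => forall a : U M, sat M c (upd s v a) g
  | FEx v g => exists a : U M, sat M c (upd s v a) g
  end.

Definition term_ok (nc : nat) (t : term) : Prop :=
  match t with TVar _ => True | TConst k => k < nc end.

(* f is a formula of the language Theta expanded by the constants c_0..c_{nc-1} *)
Fixpoint wf (theta : nat -> Prop) (nc : nat) (f : form) : Prop :=
  match f with
  | FBot => True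
  | FPred n t => theta n /\ term_ok nc t
  | FRel _ t1 t2 => term_ok nc t1 /\ term_ok nc t2
  | FNot g => wf theta nc g
  | FAnd g h | FOr g h | FImp g h => wf theta nc g /\ wf theta nc h
  | FAll _ g | FEx _ g => wf theta nc g
  end.

Definition term_has_var (t : term) (v : nat) : Prop :=
  match t with TVar w => w = v | TConst _ => False end.

Fixpoint free (f : form) (v : nat) : Prop :=
  match f with
  | FBot => False
  | FPred _ t => term_has_var t v
  | FRel _ t1 t2 => term_has_var t1 v \/ term_has_var t2 v
  | FNot g => free g v
  | FAnd g h | FOr g h | FImp g h => free g v \/ free h v
  | FAll w g | FEx w g => w <> v /\ free g v
  end.

Definition sentence (f : form) : Prop := forall v, ~ free f v.

(* Gamma (with free variables among w_0..w_{k-1}) is consistent with the set of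
   all sentences true in [M, a_n]: some structure for the expanded language
   satisfies Th([M,a_n]) together with Gamma (semantic consistency; equivalent
   to syntactic consistency by completeness). *)
Definition consistent_with_theory (theta : nat -> Prop) (M : model) (n : nat)
    (abar : nat -> U M) (Gamma : form -> Prop) : Prop :=
  exists (N : model) (cN sN : nat -> U N),
    (forall psi, wf theta n psi -> sentence psi ->
        sat M abar (fun _ => inh M) psi -> sat N cN sN psi) /\
    (forall phi, Gamma phi -> sat N cN sN phi).

Definition omega_saturated (theta : nat -> Prop) (M : model) : Prop :=
  forall (k n : nat) (abar : nat -> U M) (Gamma : form -> Prop),
    (forall phi, Gamma phi -> wf theta n phi /\ (forall v, free phi v -> v < k)) ->
    consistent_with_theory theta M n abar Gamma ->
    exists s : nat -> U M, forall phi, Gamma phi -> sat M abar s phi.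

Inductive mform : Type :=
| MVar (n : nat)
| MBot
| MAnd (I J : mform)
| MOr (I J : mform)
| MImp (I J : mform)
| MBox (I : mform)
| MDia (I : mform).

(* standard translation; the bound variables y, z are x+1, x+2
   (all bound variables of ST22 I x are > x, so no capture occurs) *)
Fixpoint ST22 (I : mform) (x : nat) : form :=
  match I with
  | MVar n => FPred n (TVar x)
  | MBot => FBot
  | MAnd I1 J1 => FAnd (ST22 I1 x) (ST22 J1 x)
  | MOr I1 J1 => FOr (ST22 I1 x) (ST22 J1 x)
  | MImp I1 J1 =>
      FAll (S x) (FImp (FRel RelR (TVar x) (TVar (S x)))
                       (FImp (ST22 I1 (S x)) (ST22 J1 (S x))))
  | MBox I1 =>
      FAll (S x) (FImp (FRel RelR (TVar x) (TVar (S x)))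
        (FAll (S (S x)) (FImp (FRel RelBox (TVar (S x)) (TVar (S (S x))))
                              (ST22 I1 (S (S x))))))
  | MDia I1 =>
      FAll (S x) (FImp (FRel RelR (TVar x) (TVar (S x)))
        (FEx (S (S x)) (FAnd (FRel RelDia (TVar (S x)) (TVar (S (S x))))
                             (ST22 I1 (S (S x))))))
  end.

Definition in_int (theta : nat -> Prop) (x : nat) (phi : form) : Prop :=
  (exists I : mform, phi = ST22 I x) /\ wf theta 0 phi.

Definition holds (M : model) (x : nat) (a : U M) (phi : form) : Prop :=
  forall s : nat -> U M, s x = a -> sat M (fun _ => inh M) s phi.

Definition tp (theta : nat -> Prop) (x : nat) (M : model) (t : U M) (phi : form) : Prop :=
  in_int theta x phi /\ holds M x t phi.

Definition ntp (theta : nat -> Prop) (x : nat) (M : model) (t : U M) (phi : form) : Prop :=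
  in_int theta x phi /\ ~ holds M x t phi.

(* imp_x(M,t) = intersection of ntp(M,u) over R_Dia-successors u of t
   (taken inside int_x(Theta), so it is int_x(Theta) when t has none) *)
Definition imp (theta : nat -> Prop) (x : nat) (M : model) (t : U M) (phi : form) : Prop :=
  in_int theta x phi /\ (forall u : U M, mRD M t u -> ntp theta x M u phi).

(* points of U_1 and U_2 are tagged: true = model 1, false = model 2 *)
Definition pick (M1 M2 : model) (b : bool) : model := if b then M1 else M2.
Definition elt (M1 M2 : model) : Type := {b : bool & U (pick M1 M2 b)}.

Definition mk {M1 M2 : model} (b : bool) (a : U (pick M1 M2 b)) : elt M1 M2 :=
  existT (fun b => U (pick M1 M2 b)) b a.

Definition asimulation22 (theta : nat -> Prop) (M1 M2 : model) (t : U M1) (u : U M2)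
    (A B : elt M1 M2 -> elt M1 M2 -> Prop) : Prop :=
  (* A, B are subsets of (U1 x U2) u (U2 x U1) *)
  (forall p q, A p q -> projT1 p <> projT1 q) /\
  (forall p q, B p q -> projT1 p <> projT1 q) /\
  A (@mk M1 M2 true t) (@mk M1 M2 false u) /\
  (forall (i j : bool) (a : U (pick M1 M2 i)) (b : U (pick M1 M2 j)),
     A (mk i a) (mk j b) ->
     forall n, theta n -> mP (pick M1 M2 i) n a -> mP (pick M1 M2 j) n b) /\
  (forall (i j : bool) (a : U (pick M1 M2 i)) (b d : U (pick M1 M2 j)),
     A (mk i a) (mk j b) -> mR _ b d ->
     exists c : U (pick M1 M2 i), mR _ a c /\ A (mk i c) (mk j d) /\ A (mk j d) (mk i c)) /\
  (forall (i j : bool) (a : U (pick M1 M2 i)) (b d f : U (pick M1 M2 j)),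
     A (mk i a) (mk j b) -> mR _ b d -> mRB _ d f ->
     exists c e : U (pick M1 M2 i), mR _ a c /\ mRB _ c e /\ A (mk i e) (mk j f)) /\
  (forall (i j : bool) (a : U (pick M1 M2 i)) (b d : U (pick M1 M2 j)),
     A (mk i a) (mk j b) -> mR _ b d ->
     exists c : U (pick M1 M2 i), mR _ a c /\ B (mk i c) (mk j d)) /\
  (forall (i j : bool) (a c : U (pick M1 M2 i)) (b : U (pick M1 M2 j)),
     B (mk i a) (mk j b) -> mRD _ a c ->
     exists d : U (pick M1 M2 j), mRD _ b d /\ A (mk i c) (mk j d)).

Definition A_tp (theta : nat -> Prop) (x : nat) (M1 M2 : model)
    (p q : elt M1 M2) : Prop :=
  projT1 p <> projT1 q /\
  (forall phi, tp theta x (pick M1 M2 (projT1 p)) (projT2 p) phi ->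
               tp theta x (pick M1 M2 (projT1 q)) (projT2 q) phi).

Definition B_imp (theta : nat -> Prop) (x : nat) (M1 M2 : model)
    (p q : elt M1 M2) : Prop :=
  projT1 p <> projT1 q /\
  (forall phi, imp theta x (pick M1 M2 (projT1 q)) (projT2 q) phi ->
               imp theta x (pick M1 M2 (projT1 p)) (projT2 p) phi).

(* The relations A and B are inclusions of intuitionistic modal types, so every
   clause of an asimulation asks for a successor that realizes a type over one
   parameter.  Any finite part of that type is summarized by a single modal
   formula (an implication for the R-clause, a box, a diamond of a disjunction,
   a conjunction for the B-clause), and the type inclusion at hand transfers
   that formula; hence the type is finitely satisfiable, and omega-saturation
   realizes it.  Saturation is phrased with semantic consistency, so finite
   satisfiability is turned into consistency with Th([M, a]) by the compactness
   theorem, proved by a Henkin construction over the countable language. *)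

From Pilot Require Import Defs.
From Stdlib Require Import Arith Lia List Cantor Classical ClassicalEpsilon FunctionalExtensionality.
Import ListNotations.

(** * Substitution and coincidence *)

Lemma upd_eq {A : Type} (s : nat -> A) v a : upd s v a v = a.
Proof. unfold upd. now rewrite Nat.eqb_refl. Qed.

Lemma upd_neq {A : Type} (s : nat -> A) v a w : w <> v -> upd s v a w = s w.
Proof. intro H. unfold upd. apply Nat.eqb_neq in H. now rewrite H. Qed.

Definition subst_term (sg : nat -> term) (t : term) : term :=
  match t with TVar v => sg v | TConst k => TConst k end.

Fixpoint subst (sg : nat -> term) (f : form) : form :=
  match f with
  | FBot => FBot
  | FPred n t => FPred n (subst_term sg t)
  | FRel r t1 t2 => FRel r (subst_term sg t1) (subst_term sg t2)
  | FNot g => FNot (subst sg g)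
  | FAnd g h => FAnd (subst sg g) (subst sg h)
  | FOr g h => FOr (subst sg g) (subst sg h)
  | FImp g h => FImp (subst sg g) (subst sg h)
  | FAll v g => FAll v (subst (upd sg v (TVar v)) g)
  | FEx v g => FEx v (subst (upd sg v (TVar v)) g)
  end.

Definition capture_free (sg : nat -> term) : Prop :=
  forall w, sg w = TVar w \/ exists k, sg w = TConst k.

Lemma capture_free_upd sg v : capture_free sg -> capture_free (upd sg v (TVar v)).
Proof.
  intros H w. destruct (Nat.eq_dec w v) as [->|Hn].
  - rewrite upd_eq; auto.
  - rewrite upd_neq; auto.
Qed.

Lemma eval_subst_upd (M : model) c s sg v a : capture_free sg ->
  (fun w => eval_term M c (upd s v a) (upd sg v (TVar v) w))
  = upd (fun w => eval_term M c s (sg w)) v a.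
Proof.
  intro Hsg. apply functional_extensionality. intro w.
  destruct (Nat.eq_dec w v) as [->|Hn].
  - rewrite !upd_eq. simpl. now rewrite upd_eq.
  - rewrite !upd_neq by exact Hn.
    destruct (Hsg w) as [E|[k E]]; rewrite E; simpl; [now rewrite upd_neq|reflexivity].
Qed.

Lemma sat_subst (M : model) f : forall sg c s, capture_free sg ->
  sat M c s (subst sg f) <-> sat M c (fun w => eval_term M c s (sg w)) f.
Proof.
  induction f; intros sg c s Hsg; simpl; try tauto.
  - destruct t; simpl; tauto.
  - destruct t1, t2; simpl; tauto.
  - rewrite IHf by exact Hsg; tauto.
  - rewrite IHf1, IHf2 by exact Hsg; tauto.
  - rewrite IHf1, IHf2 by exact Hsg; tauto.
  - rewrite IHf1, IHf2 by exact Hsg; tauto.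
  - split; intros H a; specialize (H a);
      rewrite IHf, eval_subst_upd in * by auto using capture_free_upd; exact H.
  - split; intros [a H]; exists a;
      rewrite IHf, eval_subst_upd in * by auto using capture_free_upd; exact H.
Qed.

Lemma sat_agree_free (M : model) f : forall c s s', (forall v, free f v -> s v = s' v) ->
  sat M c s f <-> sat M c s' f.
Proof.
  induction f; intros c s s' H; simpl in *; try tauto.
  - destruct t; simpl in *; [rewrite (H v eq_refl)|]; tauto.
  - destruct t1, t2; simpl in *;
      repeat match goal with |- context [s ?v] => rewrite (H v) by auto end; tauto.
  - rewrite (IHf c s s') by exact H; tauto.
  - rewrite (IHf1 c s s'), (IHf2 c s s') by auto; tauto.
  - rewrite (IHf1 c s s'), (IHf2 c s s') by auto; tauto.
  - rewrite (IHf1 c s s'), (IHf2 c s s') by auto; tauto.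
  - assert (E : forall a, sat M c (upd s v a) f <-> sat M c (upd s' v a) f).
    { intro a. apply IHf. intros w Hw. destruct (Nat.eq_dec w v) as [->|Hn].
      - now rewrite !upd_eq.
      - rewrite !upd_neq by exact Hn. auto. }
    split; intros H1 a; apply E; auto; apply H1.
  - assert (E : forall a, sat M c (upd s v a) f <-> sat M c (upd s' v a) f).
    { intro a. apply IHf. intros w Hw. destruct (Nat.eq_dec w v) as [->|Hn].
      - now rewrite !upd_eq.
      - rewrite !upd_neq by exact Hn. auto. }
    split; intros [a H1]; exists a; apply E; exact H1.
Qed.

Lemma sat_sentence (M : model) c s s' f : sentence f -> sat M c s f <-> sat M c s' f.
Proof. intro H. apply sat_agree_free. intros v Hv. contradiction (H v Hv). Qed.

Lemma sat_agree_const th (M : model) K f : wf th K f -> forall c c' s,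
  (forall k, k < K -> c k = c' k) -> sat M c s f <-> sat M c' s f.
Proof.
  induction f; intros Hw c c' s H; simpl in *; try tauto.
  - destruct t; simpl in *; [|rewrite H by tauto]; tauto.
  - destruct t1, t2; simpl in *; rewrite ?H by tauto; tauto.
  - rewrite (IHf Hw c c') by exact H; tauto.
  - rewrite (IHf1 (proj1 Hw) c c'), (IHf2 (proj2 Hw) c c') by exact H; tauto.
  - rewrite (IHf1 (proj1 Hw) c c'), (IHf2 (proj2 Hw) c c') by exact H; tauto.
  - rewrite (IHf1 (proj1 Hw) c c'), (IHf2 (proj2 Hw) c c') by exact H; tauto.
  - split; intros H1 a; apply (IHf Hw c c' _ H); apply H1.
  - split; intros [a H1]; exists a; apply (IHf Hw c c' _ H); exact H1.
Qed.

Lemma wf_mono th th' n n' f : wf th n f -> (forall m, th m -> th' m) -> n <= n' -> wf th' n' f.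
Proof.
  intros H Ht Hn. induction f; simpl in *; try tauto.
  - destruct H as [H1 H2]. split; auto. destruct t; simpl in *; auto; lia.
  - destruct H as [H1 H2]. destruct t1, t2; simpl in *; split; auto; lia.
Qed.

Lemma wf_subst th K f : forall sg, wf th K f -> (forall w k, sg w = TConst k -> k < K) ->
  wf th K (subst sg f).
Proof.
  assert (Ht : forall sg t, term_ok K t -> (forall w k, sg w = TConst k -> k < K) ->
                 term_ok K (subst_term sg t)).
  { intros sg [v|k] Ht H; simpl in *; auto. destruct (sg v) eqn:E; simpl; eauto. }
  assert (Hu : forall sg v, (forall w k, sg w = TConst k -> k < K) ->
                 forall w k, upd sg v (TVar v) w = TConst k -> k < K).
  { intros sg v H w k. destruct (Nat.eq_dec w v) as [->|Hn].
    - rewrite upd_eq. discriminate.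
    - rewrite upd_neq by exact Hn. apply H. }
  induction f; intros sg Hw H; simpl in *; intuition eauto.
Qed.

Lemma free_subst f : forall sg v, free (subst sg f) v ->
  exists w, free f w /\ term_has_var (sg w) v.
Proof.
  induction f; intros sg u H; simpl in *; try tauto.
  - destruct t; simpl in *; [eauto|tauto].
  - destruct t1, t2; simpl in *; intuition eauto.
  - eauto.
  - destruct H as [H|H]; [destruct (IHf1 _ _ H)|destruct (IHf2 _ _ H)]; firstorder.
  - destruct H as [H|H]; [destruct (IHf1 _ _ H)|destruct (IHf2 _ _ H)]; firstorder.
  - destruct H as [H|H]; [destruct (IHf1 _ _ H)|destruct (IHf2 _ _ H)]; firstorder.
  - destruct H as [Hn H]. destruct (IHf _ _ H) as [w [Hw Hv]].
    destruct (Nat.eq_dec w v) as [->|Hwv].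
    + rewrite upd_eq in Hv. simpl in Hv. congruence.
    + rewrite upd_neq in Hv by exact Hwv. eauto.
  - destruct H as [Hn H]. destruct (IHf _ _ H) as [w [Hw Hv]].
    destruct (Nat.eq_dec w v) as [->|Hwv].
    + rewrite upd_eq in Hv. simpl in Hv. congruence.
    + rewrite upd_neq in Hv by exact Hwv. eauto.
Qed.

Definition close (sg : nat -> nat) (f : form) : form := subst (fun w => TConst (sg w)) f.

Lemma capture_free_const (sg : nat -> nat) : capture_free (fun w => TConst (sg w)).
Proof. intro w. eauto. Qed.

Lemma sentence_close sg f : sentence (close sg f).
Proof. intros v H. destruct (free_subst _ _ _ H) as [w [_ Hw]]. exact Hw. Qed.

Lemma sat_close (M : model) sg c s f : sat M c s (close sg f) <-> sat M c (fun w => c (sg w)) f.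
Proof. unfold close. rewrite sat_subst by apply capture_free_const. reflexivity. Qed.

Definition inst (v C : nat) (f : form) : form := subst (upd TVar v (TConst C)) f.

Lemma sat_inst (M : model) v C c s f : sat M c s (inst v C f) <-> sat M c (upd s v (c C)) f.
Proof.
  unfold inst. rewrite sat_subst.
  - replace (fun w => eval_term M c s (upd TVar v (TConst C) w)) with (upd s v (c C)); [reflexivity|].
    apply functional_extensionality. intro w. destruct (Nat.eq_dec w v) as [->|Hn].
    + now rewrite !upd_eq.
    + now rewrite !upd_neq.
  - intro w. destruct (Nat.eq_dec w v) as [->|Hn].
    + rewrite upd_eq. eauto.
    + rewrite upd_neq; auto.
Qed.

Lemma sat_inst_close (M : model) c s v C (sg : nat -> nat) g :
  sat M c s (inst v C (subst (upd (fun w => TConst (sg w)) v (TVar v)) g)) <->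
  sat M c s (close (upd sg v C) g).
Proof.
  rewrite sat_inst, sat_subst, sat_close by (apply capture_free_upd, capture_free_const).
  rewrite (eval_subst_upd M c s) by apply capture_free_const. simpl.
  replace (upd (fun w => c (sg w)) v (c C)) with (fun w => c (upd sg v C w)); [reflexivity|].
  apply functional_extensionality. intro w. destruct (Nat.eq_dec w v) as [->|Hn].
  - now rewrite !upd_eq.
  - now rewrite !upd_neq.
Qed.

(** * Compactness *)

Definition term_code (t : term) : nat :=
  match t with TVar v => to_nat (0, v) | TConst k => to_nat (1, k) end.

Definition rel_code (r : rel) : nat := match r with RelR => 0 | RelBox => 1 | RelDia => 2 end.

Fixpoint form_code (f : form) : nat :=
  match f with
  | FBot => to_nat (0, 0)
  | FPred n t => to_nat (1, to_nat (n, term_code t))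
  | FRel r t1 t2 => to_nat (2, to_nat (rel_code r, to_nat (term_code t1, term_code t2)))
  | FNot g => to_nat (3, form_code g)
  | FAnd g h => to_nat (4, to_nat (form_code g, form_code h))
  | FOr g h => to_nat (5, to_nat (form_code g, form_code h))
  | FImp g h => to_nat (6, to_nat (form_code g, form_code h))
  | FAll v g => to_nat (7, to_nat (v, form_code g))
  | FEx v g => to_nat (8, to_nat (v, form_code g))
  end.

Lemma to_nat_inj a b c d : to_nat (a, b) = to_nat (c, d) -> a = c /\ b = d.
Proof. intro H. apply (f_equal of_nat) in H. rewrite !cancel_of_to in H. now inversion H. Qed.

Lemma form_code_inj f : forall f', form_code f = form_code f' -> f = f'.
Proof.
  assert (Ht : forall t t', term_code t = term_code t' -> t = t').
  { intros [] [] H; apply to_nat_inj in H; destruct H; congruence. }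
  assert (Hr : forall r r', rel_code r = rel_code r' -> r = r').
  { intros [] [] H; simpl in H; congruence. }
  induction f; intros f' H; destruct f'; cbn [form_code] in H; apply to_nat_inj in H;
    destruct H as [H1 H2]; try discriminate H1;
    repeat match goal with
    | H : to_nat _ = to_nat _ |- _ => apply to_nat_inj in H; destruct H
    end;
    f_equal; auto.
Qed.

Definition form_of_code (m : nat) : form :=
  match excluded_middle_informative (exists f, form_code f = m) with
  | left H => proj1_sig (constructive_indefinite_description _ H)
  | right _ => FBot
  end.

Lemma form_of_code_code f : form_of_code (form_code f) = f.
Proof.
  unfold form_of_code. destruct (excluded_middle_informative _) as [H|H].
  - destruct (constructive_indefinite_description _ H) as [g Hg]. now apply form_code_inj.
  - exfalso. eauto.
Qed.

Definition fin_sat (X : form -> Prop) : Prop :=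
  forall L : list form, (forall f, In f L -> X f) ->
    exists (N : model) (c s : nat -> U N), forall f, In f L -> sat N c s f.

Lemma fin_sat_mono (X Y : form -> Prop) : fin_sat Y -> (forall f, X f -> Y f) -> fin_sat X.
Proof. intros H HXY L HL. apply H. auto. Qed.

Lemma list_split (X Y : form -> Prop) L : (forall f, In f L -> X f \/ Y f) ->
  exists LX, (forall f, In f LX -> X f) /\ forall f, In f L -> In f LX \/ Y f.
Proof.
  induction L as [|g L IH]; intro HL.
  - exists []. simpl. tauto.
  - destruct IH as [LX [H1 H2]]. { intros f Hf. apply HL. now right. }
    destruct (HL g (or_introl eq_refl)) as [Hg|Hg].
    + exists (g :: LX). split.
      * intros f [<-|Hf]; auto.
      * intros f [<-|Hf]; [left; now left|]. destruct (H2 f Hf); simpl; auto.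
    + exists LX. split; auto. intros f [<-|Hf]; auto.
Qed.

Lemma fin_sat_add_or_neg X f : fin_sat X ->
  fin_sat (fun g => X g \/ g = f) \/ fin_sat (fun g => X g \/ g = FNot f).
Proof.
  intro H. apply NNPP. intro Hn. apply not_or_and in Hn. destruct Hn as [H1 H2].
  apply H1. intros L1 HL1. apply NNPP. intro Hm1. apply H2. intros L2 HL2. apply NNPP. intro Hm2.
  destruct (list_split X (fun g => g = f) L1 HL1) as [LX1 [HX1 HL1']].
  destruct (list_split X (fun g => g = FNot f) L2 HL2) as [LX2 [HX2 HL2']].
  destruct (H (LX1 ++ LX2)) as [N [c [s Hs]]].
  { intros g Hg. apply in_app_or in Hg. destruct Hg; auto. }
  destruct (classic (sat N c s f)) as [Hf|Hf]; [apply Hm1|apply Hm2]; exists N, c, s.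
  - intros g Hg. destruct (HL1' g Hg) as [Hg' | ->]; auto. apply Hs, in_or_app; auto.
  - intros g Hg. destruct (HL2' g Hg) as [Hg' | ->]; auto. apply Hs, in_or_app; auto.
Qed.

Definition const_bounded (K : nat) (f : form) : Prop := wf (fun _ => True) K f.

Lemma fin_sat_add_witness (X : form -> Prop) C v g :
  (forall f, X f -> const_bounded C f) -> const_bounded C (FEx v g) ->
  fin_sat (fun h => X h \/ h = FEx v g) ->
  fin_sat (fun h => (X h \/ h = FEx v g) \/ h = inst v C g).
Proof.
  intros HX HC H L HL.
  destruct (list_split _ _ L HL) as [L' [HL'1 HL'2]].
  destruct (H (FEx v g :: L')) as [N [c [s Hs]]].
  { intros h [<-|Hh]; auto. }
  destruct (Hs (FEx v g) (or_introl eq_refl)) as [a Ha].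
  assert (Hc : forall k, k < C -> c k = upd c C a k) by (intros k Hk; symmetry; apply upd_neq; lia).
  exists N, (upd c C a), s. intros h Hh. destruct (HL'2 h Hh) as [Hh' | ->].
  - assert (Hb : const_bounded C h) by (destruct (HL'1 h Hh') as [? | ->]; auto).
    apply (sat_agree_const _ N C h Hb c); auto. apply Hs. now right.
  - rewrite sat_inst, upd_eq. apply (sat_agree_const _ N C g HC c); auto.
Qed.

Definition const_sup_term (t : term) : nat := match t with TVar _ => 0 | TConst k => S k end.

Fixpoint const_sup (f : form) : nat :=
  match f with
  | FBot => 0
  | FPred _ t => const_sup_term t
  | FRel _ t1 t2 => max (const_sup_term t1) (const_sup_term t2)
  | FNot g => const_sup g
  | FAnd g h | FOr g h | FImp g h => max (const_sup g) (const_sup h)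
  | FAll _ g | FEx _ g => const_sup g
  end.

Fixpoint const_sup_list (L : list form) : nat :=
  match L with [] => 0 | f :: L => max (const_sup f) (const_sup_list L) end.

Lemma const_bounded_sup f n : const_sup f <= n -> const_bounded n f.
Proof.
  unfold const_bounded. induction f; simpl; intros; try tauto.
  - destruct t; simpl in *; split; auto; lia.
  - destruct t1, t2; simpl in *; split; lia.
  - split; [apply IHf1|apply IHf2]; lia.
  - split; [apply IHf1|apply IHf2]; lia.
  - split; [apply IHf1|apply IHf2]; lia.
Qed.

Lemma const_sup_list_in f L : In f L -> const_sup f <= const_sup_list L.
Proof. induction L as [|g L IH]; simpl; [tauto|]. intros [<-|H]; [lia|]. specialize (IH H). lia. Qed.

Lemma const_bounded_mono n n' f : const_bounded n f -> n <= n' -> const_bounded n' f.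
Proof. intros H Hn. eapply wf_mono; eauto. Qed.

Section Henkin.

Variable X : form -> Prop.
Variable K : nat.
Hypothesis X_fin_sat : fin_sat X.
Hypothesis X_bounded : forall f, X f -> const_bounded K f.

Definition fresh_const (L : list form) (f : form) : nat := max K (max (const_sup f) (const_sup_list L)).

Fixpoint henkin_stage (m : nat) : list form :=
  match m with
  | 0 => []
  | S m' =>
      let L := henkin_stage m' in
      let f := form_of_code m' in
      if excluded_middle_informative (fin_sat (fun g => X g \/ In g (f :: L))) then
        match f with
        | FEx v g => inst v (fresh_const L f) g :: f :: L
        | _ => f :: L
        end
      else FNot f :: L
  end.

Lemma henkin_stage_fin_sat m : fin_sat (fun f => X f \/ In f (henkin_stage m)).
Proof.
  induction m as [|m IH]; simpl.
  - eapply fin_sat_mono; [exact X_fin_sat|]. tauto.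
  - destruct (excluded_middle_informative _) as [Hd|Hd].
    + revert Hd. destruct (form_of_code m) as [| | | | | | |v0 g0|v g]; intro Hd;
        try (eapply fin_sat_mono; [exact Hd|]; simpl; tauto).
      set (L := henkin_stage m). set (C := fresh_const L (FEx v g)).
      eapply fin_sat_mono.
      * apply (fin_sat_add_witness (fun h => X h \/ In h L) C v g).
        -- intros h [Hx|Hh].
           ++ eapply const_bounded_mono; [apply X_bounded; exact Hx|]. unfold C, fresh_const. lia.
           ++ apply const_bounded_sup. apply const_sup_list_in in Hh. unfold C, fresh_const. lia.
        -- apply const_bounded_sup. unfold C, fresh_const. lia.
        -- eapply fin_sat_mono; [exact Hd|]. intros h [[Hx|Hh]| ->]; auto.
      * simpl. intros h [Hx|[Hh|[Hh|Hh]]]; auto.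
    + destruct (fin_sat_add_or_neg _ (form_of_code m) IH) as [H1|H1].
      * exfalso. apply Hd. eapply fin_sat_mono; [exact H1|]. simpl.
        intros h [Hx|[<-|Hh]]; auto.
      * eapply fin_sat_mono; [exact H1|]. simpl. intros h [Hx|[<-|Hh]]; auto.
Qed.

Lemma henkin_stage_mono m m' f : m <= m' -> In f (henkin_stage m) -> In f (henkin_stage m').
Proof.
  induction 1 as [|m' _ IH]; auto. intro Hf. specialize (IH Hf). simpl.
  destruct (excluded_middle_informative _); [destruct (form_of_code m')|]; simpl; auto.
Qed.

Definition henkin (f : form) : Prop := X f \/ exists m, In f (henkin_stage m).

Lemma henkin_fin_sat : fin_sat henkin.
Proof.
  intros L HL.
  assert (Hm : exists m, forall f, In f L -> X f \/ In f (henkin_stage m)).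
  { clear -HL. induction L as [|g L IH].
    - exists 0. simpl. tauto.
    - destruct IH as [m Hm]. { intros f Hf. apply HL. now right. }
      destruct (HL g (or_introl eq_refl)) as [Hg|[m' Hg]].
      + exists m. intros f [<-|Hf]; auto.
      + exists (max m m'). intros f [<-|Hf].
        * right. eapply henkin_stage_mono; [|exact Hg]. lia.
        * destruct (Hm f Hf); auto. right. eapply henkin_stage_mono; [|eauto]. lia. }
  destruct Hm as [m Hm]. exact (henkin_stage_fin_sat m L Hm).
Qed.

Lemma henkin_consistent f : henkin f -> ~ henkin (FNot f).
Proof.
  intros H1 H2. destruct (henkin_fin_sat [f; FNot f]) as [N [c [s Hs]]].
  - intros g [<-|[<-|[]]]; auto.
  - apply (Hs (FNot f)); [|apply Hs]; simpl; auto.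
Qed.

Lemma henkin_complete f : henkin f \/ henkin (FNot f).
Proof.
  rewrite <- (form_of_code_code f). set (m := form_code f).
  assert (H : In (form_of_code m) (henkin_stage (S m)) \/
             In (FNot (form_of_code m)) (henkin_stage (S m))).
  { simpl. destruct (excluded_middle_informative _);
      [left; destruct (form_of_code m)|right]; simpl; auto. }
  destruct H; [left|right]; right; eauto.
Qed.

Lemma henkin_entails L f : (forall g, In g L -> henkin g) ->
  (forall (N : model) c s, (forall g, In g L -> sat N c s g) -> sat N c s f) -> henkin f.
Proof.
  intros HL Hent. destruct (henkin_complete f) as [H|H]; auto. exfalso.
  destruct (henkin_fin_sat (FNot f :: L)) as [N [c [s Hs]]].
  - intros g [<-|Hg]; auto.
  - apply (Hs (FNot f)); [now left|]. apply Hent. intros g Hg. apply Hs. now right.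
Qed.

Lemma henkin_equiv f g : (forall (N : model) c s, sat N c s f -> sat N c s g) ->
  henkin f -> henkin g.
Proof. intros H Hf. apply (henkin_entails [f]); [intros h [<-|[]]; exact Hf|]. auto with datatypes. Qed.

Lemma henkin_witness v g : henkin (FEx v g) -> exists C, henkin (inst v C g).
Proof.
  intro H. rewrite <- (form_of_code_code (FEx v g)) in H. set (m := form_code (FEx v g)) in H.
  assert (Hs : In (FNot (form_of_code m)) (henkin_stage (S m)) \/
               exists C, In (inst v C g) (henkin_stage (S m))).
  { simpl. destruct (excluded_middle_informative _); [right|left; now left].
    unfold m. rewrite form_of_code_code. simpl. eauto. }
  destruct Hs as [Hs|[C Hs]].
  - exfalso. apply (henkin_consistent _ H). right. eauto.
  - exists C. right. eauto.
Qed.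

Lemma henkin_not f : henkin (FNot f) <-> ~ henkin f.
Proof.
  split.
  - intros H1 H2. exact (henkin_consistent f H2 H1).
  - intro H. destruct (henkin_complete f); tauto.
Qed.

Lemma henkin_and f g : henkin (FAnd f g) <-> henkin f /\ henkin g.
Proof.
  split.
  - intro H. split; (eapply henkin_equiv; [|exact H]); simpl; tauto.
  - intros [Hf Hg]. apply (henkin_entails [f; g]).
    + intros h [<-|[<-|[]]]; auto.
    + intros N c s Hs. simpl. split; apply Hs; simpl; auto.
Qed.

Lemma henkin_imp f g : henkin (FImp f g) <-> (henkin f -> henkin g).
Proof.
  split.
  - intros H Hf. apply (henkin_entails [FImp f g; f]).
    + intros h [<-|[<-|[]]]; auto.
    + intros N c s Hs. apply (Hs (FImp f g)); [|apply Hs]; simpl; auto.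
  - intro H. destruct (henkin_complete f) as [Hf|Hf].
    + eapply henkin_equiv; [|exact (H Hf)]. simpl. auto.
    + eapply henkin_equiv; [|exact Hf]. simpl. tauto.
Qed.

Lemma henkin_or f g : henkin (FOr f g) <-> henkin f \/ henkin g.
Proof.
  split.
  - intro H. destruct (henkin_complete f) as [Hf|Hf]; auto. right.
    apply (henkin_entails [FOr f g; FNot f]).
    + intros h [<-|[<-|[]]]; auto.
    + intros N c s Hs.
      assert (Hor : sat N c s (FOr f g)) by (apply Hs; simpl; auto).
      assert (Hnf : sat N c s (FNot f)) by (apply Hs; simpl; auto).
      destruct Hor as [H1|H1]; [contradiction (Hnf H1)|exact H1].
  - intros [H|H]; (eapply henkin_equiv; [|exact H]); simpl; auto.
Qed.

Lemma henkin_all v g : henkin (FAll v g) <-> forall C, henkin (inst v C g).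
Proof.
  split.
  - intros H C. eapply henkin_equiv; [|exact H]. intros N c s Hs. apply sat_inst. apply Hs.
  - intro H. destruct (henkin_complete (FAll v g)) as [|Hn]; [assumption|exfalso].
    assert (Hex : henkin (FEx v (FNot g))).
    { eapply henkin_equiv; [|exact Hn]. intros N c s Hs. apply not_all_ex_not. exact Hs. }
    destruct (henkin_witness _ _ Hex) as [C HC].
    exact (henkin_consistent _ (H C) HC).
Qed.

Lemma henkin_ex v g : henkin (FEx v g) <-> exists C, henkin (inst v C g).
Proof.
  split; [apply henkin_witness|].
  intros [C HC]. eapply henkin_equiv; [|exact HC]. intros N c s Hs. exists (c C). now apply sat_inst.
Qed.

Definition henkin_model : model :=
  Model nat 0
    (fun a b => henkin (FRel RelR (TConst a) (TConst b)))
    (fun a b => henkin (FRel RelBox (TConst a) (TConst b)))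
    (fun a b => henkin (FRel RelDia (TConst a) (TConst b)))
    (fun n a => henkin (FPred n (TConst a))).

Lemma henkin_truth f : forall sg : nat -> nat,
  sat henkin_model (fun k => k) sg f <-> henkin (close sg f).
Proof.
  induction f; intro sg; unfold close; simpl; fold (close sg).
  - split; [tauto|]. intro H. destruct (henkin_fin_sat [FBot]) as [N [c [s Hs]]].
    + intros g [<-|[]]. exact H.
    + exact (Hs FBot (or_introl eq_refl)).
  - destruct t; simpl; tauto.
  - destruct r, t1, t2; simpl; tauto.
  - rewrite henkin_not, IHf. tauto.
  - rewrite henkin_and, IHf1, IHf2. tauto.
  - rewrite henkin_or, IHf1, IHf2. tauto.
  - rewrite henkin_imp, IHf1, IHf2. tauto.
  - assert (E : forall C, henkin (inst v C (subst (upd (fun w => TConst (sg w)) v (TVar v)) f))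
                      <-> henkin (close (upd sg v C) f))
      by (intro C; split; apply henkin_equiv; intros N c s; apply sat_inst_close).
    rewrite henkin_all. split; intros H C; [apply E, IHf | apply IHf, E]; apply H.
  - assert (E : forall C, henkin (inst v C (subst (upd (fun w => TConst (sg w)) v (TVar v)) f))
                      <-> henkin (close (upd sg v C) f))
      by (intro C; split; apply henkin_equiv; intros N c s; apply sat_inst_close).
    rewrite henkin_ex. split; intros [C H]; exists C; [apply E, IHf | apply IHf, E]; exact H.
Qed.

End Henkin.

Theorem compactness (X : form -> Prop) K :
  (forall f, X f -> const_bounded K f /\ sentence f) -> fin_sat X ->
  exists (N : model) (c s : nat -> U N), forall f, X f -> sat N c s f.
Proof.
  intros HX Hfs. assert (HK : forall f, X f -> const_bounded K f) by (intros f Hf; apply HX, Hf).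
  exists (henkin_model X K), (fun k => k), (fun _ => 0). intros f Hf.
  apply henkin_truth; [exact Hfs|exact HK|].
  apply (henkin_equiv X K Hfs HK f); [|left; exact Hf].
  intros N c s Hs. apply sat_close. apply (sat_sentence N c s); [apply HX, Hf|exact Hs].
Qed.

(** * Realizing types in omega-saturated models *)

Definition theory th (M : model) n (abar : nat -> U M) (f : form) : Prop :=
  wf th n f /\ sentence f /\ sat M abar (fun _ => inh M) f.

(* The variables [w < k] of a formula over [c_0 .. c_(n-1)] become the new
   constants [c_(n+w)]; larger variables, which will not occur, all go to
   [c_(n+k)] so that the result stays below [n + k + 1]. *)
Definition freeze (n k : nat) (phi : form) : form := close (fun w => n + Nat.min w k) phi.

Lemma list_split_image {A : Type} (X : form -> Prop) (G : A -> Prop) (h : A -> form) L :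
  (forall f, In f L -> X f \/ exists a, G a /\ f = h a) ->
  exists LX LA, (forall f, In f LX -> X f) /\ (forall a, In a LA -> G a) /\
    forall f, In f L -> In f LX \/ exists a, In a LA /\ f = h a.
Proof.
  induction L as [|g L IH]; intro HL.
  - exists [], []. simpl. tauto.
  - destruct IH as [LX [LA [HX [HA HLXA]]]]. { intros f Hf. apply HL. now right. }
    destruct (HL g (or_introl eq_refl)) as [Hg|[a [Ha ->]]].
    + exists (g :: LX), LA. split; [intros f [<-|Hf]; auto|split; [exact HA|]].
      intros f [<-|Hf]; [left; now left|]. destruct (HLXA f Hf) as [H|H]; [left; now right|auto].
    + exists LX, (a :: LA). split; [exact HX|split; [intros b [<-|Hb]; auto|]].
      intros f [<-|Hf]; [right; exists a; simpl; auto|].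
      destruct (HLXA f Hf) as [H|[b [Hb ->]]]; [auto|right; exists b; simpl; auto].
Qed.

Lemma fin_sat_theory_freeze th (M : model) k n (abar : nat -> U M) (G : form -> Prop) :
  (forall phi, G phi -> wf th n phi /\ forall v, free phi v -> v < k) ->
  (forall L, (forall phi, In phi L -> G phi) ->
     exists s, forall phi, In phi L -> sat M abar s phi) ->
  fin_sat (fun f => theory th M n abar f \/ exists phi, G phi /\ f = freeze n k phi).
Proof.
  intros HG Hfin L HL.
  destruct (list_split_image _ G (freeze n k) L HL) as [LT [LG [HLT [HLG HL']]]].
  destruct (Hfin LG HLG) as [s0 Hs0].
  set (c' := fun j => if j <? n then abar j else s0 (j - n)).
  assert (Hc : forall j, j < n -> abar j = c' j).
  { intros j Hj. unfold c'. apply Nat.ltb_lt in Hj. now rewrite Hj. }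
  exists M, c', s0. intros f Hf. destruct (HL' f Hf) as [Hf'|[phi [Hphi ->]]].
  - destruct (HLT f Hf') as [Hw [Hse Hsat]].
    apply (sat_sentence M c' (fun _ => inh M)); [exact Hse|].
    apply (sat_agree_const th M n f Hw abar c' _ Hc). exact Hsat.
  - apply sat_close. destruct (HG phi (HLG phi Hphi)) as [Hw Hfree].
    apply (sat_agree_const th M n phi Hw abar c' _ Hc).
    apply (sat_agree_free M phi abar s0); [|apply Hs0, Hphi].
    intros v Hv. specialize (Hfree v Hv). unfold c'.
    replace (n + Nat.min v k <? n) with false by (symmetry; apply Nat.ltb_ge; lia).
    f_equal. lia.
Qed.

Lemma saturated_realize th (M : model) (HM : omega_saturated th M) k n (abar : nat -> U M)
    (G : form -> Prop) :
  (forall phi, G phi -> wf th n phi /\ forall v, free phi v -> v < k) ->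
  (forall L, (forall phi, In phi L -> G phi) ->
     exists s, forall phi, In phi L -> sat M abar s phi) ->
  exists s, forall phi, G phi -> sat M abar s phi.
Proof.
  intros HG Hfin. apply (HM k n abar G HG).
  destruct (compactness (fun f => theory th M n abar f \/ exists phi, G phi /\ f = freeze n k phi)
              (n + k + 1)) as [N [c [s HN]]].
  - intros f [[Hw [Hse _]]|[phi [Hphi ->]]].
    + split; [eapply wf_mono; eauto; lia|exact Hse].
    + split; [|apply sentence_close]. apply wf_subst.
      * eapply wf_mono; [apply HG, Hphi|auto|lia].
      * intros w k0 E. injection E as <-. lia.
  - exact (fin_sat_theory_freeze th M k n abar G HG Hfin).
  - exists N, c, (fun w => c (n + Nat.min w k)). split.
    + intros psi Hw Hse Hsat. apply (sat_sentence N c s); [exact Hse|]. apply HN. left.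
      repeat split; assumption.
    + intros phi Hphi. apply (sat_close N _ c s). apply HN. right; eauto.
Qed.

(* The indices [d] stand for modal formulas summarizing finite parts of [G];
   [join] is their conjunction or disjunction. *)
Lemma saturated_realize_directed th (M : model) (HM : omega_saturated th M) k n
    (abar : nat -> U M) (G : form -> Prop) (D : Type) (admissible : D -> Prop)
    (realizes : D -> (nat -> U M) -> Prop) (d0 : D) (join : D -> D -> D) :
  (forall phi, G phi -> wf th n phi /\ forall v, free phi v -> v < k) ->
  admissible d0 ->
  (forall d e, admissible d -> admissible e -> admissible (join d e)) ->
  (forall d e s, realizes (join d e) s -> realizes d s /\ realizes e s) ->
  (forall phi, G phi -> exists d, admissible d /\ forall s, realizes d s -> sat M abar s phi) ->
  (forall d, admissible d -> exists s, realizes d s) ->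
  exists s, forall phi, G phi -> sat M abar s phi.
Proof.
  intros HG Hd0 Hjoin Hreal Hcover Hex. apply (saturated_realize th M HM k n abar G HG).
  intros L HL.
  assert (Hd : exists d, admissible d /\
                 forall s, realizes d s -> forall phi, In phi L -> sat M abar s phi).
  { clear -HL Hd0 Hjoin Hreal Hcover. induction L as [|phi L IH].
    - exists d0. simpl. tauto.
    - destruct IH as [d [Hd Hds]]. { intros psi Hpsi. apply HL. now right. }
      destruct (Hcover phi (HL phi (or_introl eq_refl))) as [e [He Hes]].
      exists (join e d). split; [auto|].
      intros s Hs psi [<-|Hpsi]; destruct (Hreal e d s Hs); auto. }
  destruct Hd as [d [Hd Hds]]. destruct (Hex d Hd) as [s Hs]. exists s. exact (Hds s Hs).
Qed.

(** * Forcing and the standard translation *)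

Fixpoint force (M : model) (a : U M) (I : mform) : Prop :=
  match I with
  | MVar n => mP M n a
  | MBot => False
  | MAnd I1 J1 => force M a I1 /\ force M a J1
  | MOr I1 J1 => force M a I1 \/ force M a J1
  | MImp I1 J1 => forall b, mR M a b -> force M b I1 -> force M b J1
  | MBox I1 => forall b, mR M a b -> forall e, mRB M b e -> force M e I1
  | MDia I1 => forall b, mR M a b -> exists e, mRD M b e /\ force M e I1
  end.

Fixpoint mform_wf (th : nat -> Prop) (I : mform) : Prop :=
  match I with
  | MVar n => th n
  | MBot => True
  | MAnd I1 J1 | MOr I1 J1 | MImp I1 J1 => mform_wf th I1 /\ mform_wf th J1
  | MBox I1 | MDia I1 => mform_wf th I1
  end.

Definition MTop : mform := MImp MBot MBot.

Ltac simpl_upd := repeat first [rewrite upd_eq in * | rewrite upd_neq in * by lia].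

Lemma sat_ST22 (M : model) I : forall y c s, sat M c s (ST22 I y) <-> force M (s y) I.
Proof.
  induction I; intros y c s; simpl; try tauto.
  - rewrite IHI1, IHI2; tauto.
  - rewrite IHI1, IHI2; tauto.
  - split; intros H b; specialize (H b); rewrite IHI1, IHI2 in *; simpl_upd; exact H.
  - split.
    + intros H b Hb e He. specialize (H b). simpl_upd. specialize (H Hb e). simpl_upd.
      rewrite IHI in H. simpl_upd. auto.
    + intros H b Hb e He. simpl_upd. rewrite IHI. simpl_upd. eauto.
  - split.
    + intros H b Hb. specialize (H b). simpl_upd. destruct (H Hb) as [e [He1 He2]]. exists e.
      rewrite IHI in He2. simpl_upd. auto.
    + intros H b Hb. simpl_upd. destruct (H b Hb) as [e [He1 He2]]. exists e.
      rewrite IHI. simpl_upd. auto.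
Qed.

Lemma wf_ST22 th I : forall n y, mform_wf th I -> wf th n (ST22 I y).
Proof. induction I; intros n0 y H; simpl in *; intuition. Qed.

Lemma mform_wf_ST22 th I : forall n y, wf th n (ST22 I y) -> mform_wf th I.
Proof. induction I; intros n0 y H; simpl in *; intuition eauto. Qed.

Lemma free_ST22 I : forall y v, free (ST22 I y) v -> v = y.
Proof.
  induction I; intros y v H; simpl in *;
  repeat match goal with
  | H : _ /\ _ |- _ => destruct H
  | H : _ \/ _ |- _ => destruct H
  | H : free (ST22 _ _) _ |- _ => first [apply IHI in H | apply IHI1 in H | apply IHI2 in H]
  end; try tauto; try congruence; lia.
Qed.

Lemma holds_ST22 (M : model) x a I : holds M x a (ST22 I x) <-> force M a I.
Proof.
  unfold holds. split.
  - intro H. apply (sat_ST22 M I x (fun _ => inh M) (fun _ => a)), H. reflexivity.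
  - intros H s Hs. apply sat_ST22. now rewrite Hs.
Qed.

Definition type_incl th (Ma : model) (a : U Ma) (Mb : model) (b : U Mb) : Prop :=
  forall I, mform_wf th I -> force Ma a I -> force Mb b I.

Definition refuted_succ (M : model) (a : U M) (I : mform) : Prop :=
  forall u, mRD M a u -> ~ force M u I.

(* [imp_x(Ma, a)] is included in [imp_x(Mb, b)]. *)
Definition imp_incl th (Ma : model) (a : U Ma) (Mb : model) (b : U Mb) : Prop :=
  forall I, mform_wf th I -> refuted_succ Ma a I -> refuted_succ Mb b I.

Lemma in_int_ST22 (th : nat -> Prop) (x : nat) (phi : form) :
  Defs.in_int th x phi <-> exists I, mform_wf th I /\ phi = ST22 I x.
Proof.
  unfold Defs.in_int. split.
  - intros [[I ->] Hw]. exists I. split; [eapply mform_wf_ST22; eauto|reflexivity].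
  - intros [I [Hw ->]]. split; [eauto|apply wf_ST22, Hw].
Qed.

Lemma A_tp_mk th x M1 M2 i j (a : U (pick M1 M2 i)) (b : U (pick M1 M2 j)) :
  A_tp th x M1 M2 (mk i a) (mk j b) <-> i <> j /\ type_incl th _ a _ b.
Proof.
  unfold A_tp, tp, mk, type_incl; cbn [projT1 projT2].
  setoid_rewrite in_int_ST22. split.
  - intros [Hij H]. split; [exact Hij|]. intros I Hw Hf.
    rewrite <- (holds_ST22 _ x). apply H. split; [eauto|]. now rewrite holds_ST22.
  - intros [Hij H]. split; [exact Hij|]. intros phi [[I [Hw ->]] Hh]. split; [eauto|].
    rewrite holds_ST22 in *. auto.
Qed.

Lemma B_imp_mk th x M1 M2 i j (c : U (pick M1 M2 i)) (d : U (pick M1 M2 j)) :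
  B_imp th x M1 M2 (mk i c) (mk j d) <-> i <> j /\ imp_incl th _ d _ c.
Proof.
  unfold B_imp, imp, ntp, mk, imp_incl, refuted_succ; cbn [projT1 projT2].
  setoid_rewrite in_int_ST22. split.
  - intros [Hij H]. split; [exact Hij|]. intros I Hw Hd u Hu Hf.
    destruct (H (ST22 I x)) as [_ H2].
    + split; [eauto|]. intros u' Hu'. split; [eauto|]. rewrite holds_ST22. auto.
    + destruct (H2 u Hu) as [_ H3]. apply H3. now rewrite holds_ST22.
  - intros [Hij H]. split; [exact Hij|]. intros phi [[I [Hw ->]] Hd]. split; [eauto|].
    intros u Hu. split; [eauto|]. rewrite holds_ST22. apply (H I Hw); [|exact Hu].
    intros u' Hu'. destruct (Hd u' Hu') as [_ H3]. rewrite holds_ST22 in H3. exact H3.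
Qed.

(** * Back-and-forth steps *)

Lemma ST22_bounded th n k I y : mform_wf th I -> y < k ->
  wf th n (ST22 I y) /\ forall v, free (ST22 I y) v -> v < k.
Proof. intros Hw Hy. split; [now apply wf_ST22|]. intros v Hv. apply free_ST22 in Hv. lia. Qed.

Section Steps.

Variable th : nat -> Prop.
Variable x : nat.
Variables Ma Mb : model.

Lemma type_incl_back_R (HM : omega_saturated th Ma) (a : U Ma) (b d : U Mb) :
  type_incl th Ma a Mb b -> mR Mb b d ->
  exists c, mR Ma a c /\ type_incl th Ma c Mb d /\ type_incl th Mb d Ma c.
Proof.
  intros Hab Hbd.
  set (G := fun phi => phi = FRel RelR (TConst 0) (TVar x) \/
        (exists I, mform_wf th I /\ force Mb d I /\ phi = ST22 I x) \/
        (exists I, mform_wf th I /\ ~ force Mb d I /\ phi = FNot (ST22 I x))).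
  destruct (saturated_realize_directed th Ma HM (S x) 1 (fun _ => a) G (mform * mform)
      (fun '(P, Q) => mform_wf th P /\ force Mb d P /\ mform_wf th Q /\ ~ force Mb d Q)
      (fun '(P, Q) s => mR Ma a (s x) /\ force Ma (s x) P /\ ~ force Ma (s x) Q)
      (MTop, MBot) (fun '(P, Q) '(P', Q') => (MAnd P P', MOr Q Q'))) as [s Hs].
  - intros phi [->|[[I [Hw [_ ->]]]|[I [Hw [_ ->]]]]]; simpl;
      try (apply ST22_bounded; [assumption|lia]).
    split; [auto|]. intros v [[]|Hv]. lia.
  - simpl. tauto.
  - intros [P Q] [P' Q']. simpl. tauto.
  - intros [P Q] [P' Q'] s. simpl. tauto.
  - intros phi [->|[[I [Hw [Hd ->]]]|[I [Hw [Hd ->]]]]].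
    + exists (MTop, MBot). simpl. split; [tauto|]. intros s [H _]. exact H.
    + exists (I, MBot). simpl. split; [tauto|]. intros s [_ [H _]]. now apply sat_ST22.
    + exists (MTop, I). simpl. split; [tauto|].
      intros s [_ [_ H]] H'. apply H. now apply sat_ST22 in H'.
  (* otherwise [a] forces [P -> Q], hence so does [b], and [d] would force [Q] *)
  - intros [P Q] [HP [HdP [HQ HdQ]]]. apply NNPP. intro Hn. apply HdQ.
    apply (Hab (MImp P Q)); [simpl; auto| |exact Hbd|exact HdP].
    intros c Hc HcP. apply NNPP. intro HcQ. apply Hn. exists (fun _ => c). simpl. auto.
  - exists (s x). split; [exact (Hs _ (or_introl eq_refl))|split].
    + intros I Hw Hc. apply NNPP. intro Hd.
      apply (Hs (FNot (ST22 I x))); [right; right; eauto|]. now apply sat_ST22.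
    + intros I Hw Hd. apply (sat_ST22 Ma I x (fun _ => a) s). apply Hs. right; left; eauto.
Qed.

Lemma type_incl_back_R_RB (HM : omega_saturated th Ma) (a : U Ma) (b d f : U Mb) :
  type_incl th Ma a Mb b -> mR Mb b d -> mRB Mb d f ->
  exists c e, mR Ma a c /\ mRB Ma c e /\ type_incl th Ma e Mb f.
Proof.
  intros Hab Hbd Hdf.
  set (G := fun phi => phi = FRel RelR (TConst 0) (TVar (S x)) \/
        phi = FRel RelBox (TVar (S x)) (TVar x) \/
        (exists I, mform_wf th I /\ ~ force Mb f I /\ phi = FNot (ST22 I x))).
  destruct (saturated_realize_directed th Ma HM (S (S x)) 1 (fun _ => a) G mform
      (fun Q => mform_wf th Q /\ ~ force Mb f Q)
      (fun Q s => mR Ma a (s (S x)) /\ mRB Ma (s (S x)) (s x) /\ ~ force Ma (s x) Q)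
      MBot MOr) as [s Hs].
  - intros phi [->|[->|[I [Hw [_ ->]]]]]; simpl.
    + split; [auto|]. intros v [[]|Hv]. lia.
    + split; [auto|]. intros v [Hv|Hv]; lia.
    + apply ST22_bounded; [exact Hw|lia].
  - simpl. tauto.
  - simpl. tauto.
  - simpl. tauto.
  - intros phi [->|[->|[I [Hw [Hf ->]]]]].
    + exists MBot. simpl. split; [tauto|]. intros s [H _]. exact H.
    + exists MBot. simpl. split; [tauto|]. intros s [_ [H _]]. exact H.
    + exists I. simpl. split; [tauto|]. intros s [_ [_ H]] H'. apply H. now apply sat_ST22 in H'.
  (* otherwise [a] forces [Box Q], hence so does [b], and [f] would force [Q] *)
  - intros Q [HQ HfQ]. apply NNPP. intro Hn. apply HfQ.
    refine (Hab (MBox Q) HQ _ d Hbd f Hdf).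
    intros c Hc e He. apply NNPP. intro HeQ. apply Hn.
    exists (upd (fun _ => e) (S x) c). rewrite upd_eq, upd_neq by lia. auto.
  - exists (s (S x)), (s x). split; [exact (Hs _ (or_introl eq_refl))|split].
    + exact (Hs (FRel RelBox (TVar (S x)) (TVar x)) (or_intror (or_introl eq_refl))).
    + intros I Hw He. apply NNPP. intro Hf.
      apply (Hs (FNot (ST22 I x))); [right; right; eauto|]. now apply sat_ST22.
Qed.

Lemma type_incl_forth_B (HM : omega_saturated th Ma) (a : U Ma) (b d : U Mb) :
  type_incl th Ma a Mb b -> mR Mb b d ->
  exists c, mR Ma a c /\ imp_incl th Mb d Ma c.
Proof.
  intros Hab Hbd.
  set (refuting := fun I => FAll (S x) (FImp (FRel RelDia (TVar x) (TVar (S x)))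
                                            (FNot (ST22 I (S x))))).
  assert (Hrefuting : forall I s, sat Ma (fun _ => a) s (refuting I) <-> refuted_succ Ma (s x) I).
  { intros I s. unfold refuting, refuted_succ. simpl.
    split; intros H u; specialize (H u); rewrite sat_ST22 in *; simpl_upd; exact H. }
  set (G := fun phi => phi = FRel RelR (TConst 0) (TVar x) \/
        (exists I, mform_wf th I /\ refuted_succ Mb d I /\ phi = refuting I)).
  destruct (saturated_realize_directed th Ma HM (S x) 1 (fun _ => a) G mform
      (fun J => mform_wf th J /\ refuted_succ Mb d J)
      (fun J s => mR Ma a (s x) /\ refuted_succ Ma (s x) J)
      MBot MOr) as [s Hs].
  - intros phi [->|[I [Hw [_ ->]]]]; unfold refuting; simpl.
    + split; [auto|]. intros v [[]|Hv]. lia.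
    + split; [split; [simpl; auto|now apply wf_ST22]|]. intros v [Hv [[Hv'|Hv']|Hv']]; try lia.
      apply free_ST22 in Hv'. lia.
  - unfold refuted_succ. simpl. tauto.
  - unfold refuted_succ. simpl. intros J J' [HJ HdJ] [HJ' HdJ'].
    split; [tauto|]. intros u Hu [H|H]; [eapply HdJ|eapply HdJ']; eauto.
  - unfold refuted_succ. simpl. intros J J' s [Hsx H].
    split; split; auto; intros u Hu HuJ; apply (H u Hu); auto.
  - intros phi [->|[I [Hw [Hd ->]]]].
    + exists MBot. split; [split; [constructor|intros u _ []]|]. intros s [H _]. exact H.
    + exists I. split; [tauto|]. intros s [_ H]. now apply Hrefuting.
  (* otherwise [a] forces [Dia J], hence so does [b], and some [R_Dia]-successor
     of [d] would force [J] *)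
  - intros J [HJ HdJ]. apply NNPP. intro Hn.
    assert (HaJ : force Ma a (MDia J)).
    { intros c Hc. apply NNPP. intro HcJ. apply Hn. exists (fun _ => c). split; [exact Hc|].
      intros u Hu HuJ. apply HcJ. eauto. }
    destruct (Hab (MDia J) HJ HaJ d Hbd) as [e [Hde HeJ]]. exact (HdJ e Hde HeJ).
  - exists (s x). split; [exact (Hs _ (or_introl eq_refl))|].
    intros I Hw Hd. apply Hrefuting, Hs. right. eauto.
Qed.

Lemma imp_incl_back_B (HM : omega_saturated th Mb) (a c : U Ma) (b : U Mb) :
  imp_incl th Mb b Ma a -> mRD Ma a c ->
  exists d, mRD Mb b d /\ type_incl th Ma c Mb d.
Proof.
  intros Hba Hac.
  set (G := fun phi => phi = FRel RelDia (TConst 0) (TVar x) \/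
        (exists I, mform_wf th I /\ force Ma c I /\ phi = ST22 I x)).
  destruct (saturated_realize_directed th Mb HM (S x) 1 (fun _ => b) G mform
      (fun P => mform_wf th P /\ force Ma c P)
      (fun P s => mRD Mb b (s x) /\ force Mb (s x) P)
      MTop MAnd) as [s Hs].
  - intros phi [->|[I [Hw [_ ->]]]]; simpl; [|apply ST22_bounded; [exact Hw|lia]].
    split; [auto|]. intros v [[]|Hv]. lia.
  - simpl. tauto.
  - simpl. tauto.
  - simpl. tauto.
  - intros phi [->|[I [Hw [Hc ->]]]].
    + exists MTop. simpl. split; [tauto|]. intros s [H _]. exact H.
    + exists I. split; [tauto|]. intros s [_ H]. now apply sat_ST22.
  (* otherwise [P] lies in [imp(b)], hence in [imp(a)], which [a R_Dia c] refutes *)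
  - intros P [HP HcP]. apply NNPP. intro Hn.
    apply (Hba P HP) with (u := c); [|exact Hac|exact HcP].
    intros u Hu HuP. apply Hn. exists (fun _ => u). split; assumption.
  - exists (s x). split; [exact (Hs _ (or_introl eq_refl))|].
    intros I Hw Hc. apply (sat_ST22 Mb I x (fun _ => b) s). apply Hs. right. eauto.
Qed.

End Steps.

Theorem mainTheorem7 (theta : nat -> Prop) (M1 M2 : model)
  (sat1 : omega_saturated theta M1) (sat2 : omega_saturated theta M2)
  (x : nat) (t : U M1) (t' : U M2)
  (htp : forall phi, tp theta x M1 t phi -> tp theta x M2 t' phi) :
  asimulation22 theta M1 M2 t t' (A_tp theta x M1 M2) (B_imp theta x M1 M2).
Proof.
  assert (satp : forall b, omega_saturated theta (pick M1 M2 b)) by (intros []; assumption).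
  unfold asimulation22. repeat match goal with |- _ /\ _ => split end.
  - intros p q [H _]. exact H.
  - intros p q [H _]. exact H.
  - split; [discriminate|exact htp].
  - intros i j a b HA n Hn Hp. apply A_tp_mk in HA. exact (proj2 HA (MVar n) Hn Hp).
  - intros i j a b d HA Hbd. apply A_tp_mk in HA. destruct HA as [Hij HA].
    destruct (type_incl_back_R _ x _ _ (satp i) a b d HA Hbd) as [c [Hac [Hcd Hdc]]].
    exists c. rewrite !A_tp_mk. auto.
  - intros i j a b d f HA Hbd Hdf. apply A_tp_mk in HA. destruct HA as [Hij HA].
    destruct (type_incl_back_R_RB _ x _ _ (satp i) a b d f HA Hbd Hdf) as [c [e [Hac [Hce Hef]]]].
    exists c, e. rewrite A_tp_mk. auto.
  - intros i j a b d HA Hbd. apply A_tp_mk in HA. destruct HA as [Hij HA].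
    destruct (type_incl_forth_B _ x _ _ (satp i) a b d HA Hbd) as [c [Hac Hdc]].
    exists c. rewrite B_imp_mk. auto.
  - intros i j a c b HB Hac. apply B_imp_mk in HB. destruct HB as [Hij HB].
    destruct (imp_incl_back_B _ x _ _ (satp j) a c b HB Hac) as [d [Hbd Hcd]].
    exists d. rewrite A_tp_mk. auto.
Qed.
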